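(* Let $\Sigma$ be a non-orientable surface (possibly with boundary), let $D\subset\Sigma$ be a diagram of an oriented pseudo-classical knot in $\hat\Sigma=\Sigma\times[0,1]$, fix a labeling of its $2$-cabling $D^2$, and let $x$ be a crossing of $D$. (1) If $x$ is of type $1$, then each of the following transformations multiplies $\operatorname{sign}(x)$ by $-1$: (a) the crossing change operation at $x$; (b) reversing the orientation of $D$; (c) relabeling $D^2$. (2) If $x$ is of type $2$, then $\operatorname{sign}(x)$ is preserved under the crossing change operation at $x$, while relabeling $D^2$ and reversing the orientation of $D$ each multiply $\operatorname{sign}(x)$ by $-1$.
   Context: $\hat\Sigma=\Sigma\times[0,1]$ is the non-orientable $3$-manifold with fixed product structure; knots in it are represented by diagrams on $\Sigma$ (projections with over/under information at double points). A knot $K\subset\hat\Sigma$ is pseudo-classical if it is an orientation-preserving loop in $\hat\Sigma$ (equivalently its regular neighbourhood is a solid torus); then its diagram $D$ is an orientation-preserving loop in $\Sigma$. The $2$-cabling $D^2$ is the diagram obtained by replacing $D$ by two parallel copies (a doubled line) preserving over/under information at all crossings; for pseudo-classical $K$ it has two components. A labeling of $D^2$ is a choice of calling one component the ''right'' one $R(D)$ and the other the ''left'' one $L(D)$ (this is only a naming, since $\Sigma$ has no orientation); relabeling swaps the names. Both components are oriented consistently with $D$. Each crossing $x$ of $D$ gives a pattern of $4$ crossings of $D^2$; the input crossing $\mathrm{In}(x)$ is the crossing of the pattern at which both strands of $D^2$ passing through it enter the pattern (the first crossing of the pattern on both strands, traversed in the positive direction); the output crossing is defined analogously with ''leave''.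 The sign of $x$ is $\operatorname{sign}(x)=1$ if $R(D)$ goes over $L(D)$ at $\mathrm{In}(x)$; $-1$ if $L(D)$ goes over $R(D)$ at $\mathrm{In}(x)$; $i$ if $R(D)$ goes over itself at $\mathrm{In}(x)$; $-i$ if $L(D)$ goes over itself at $\mathrm{In}(x)$ ($i$ the imaginary unit). The crossing $x$ is of type $1$ if $\mathrm{In}(x)$ is an intersection of two distinct components of $D^2$ (i.e. $\operatorname{sign}(x)=\pm1$), and of type $2$ otherwise ($\operatorname{sign}(x)=\pm i$). The crossing change at $x$ swaps over- and under-branches at $x$ leaving the rest of the diagram unchanged. *)

(* Combinatorial model of an oriented knot diagram on a
   surface (signed Gauss code with twist bits), its labeled 2-cabling,
   and the sign of a crossing. *)
From mathcomp Require Import all_boot all_order all_algebra all_field.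
Set Implicit Arguments.
Unset Strict Implicit.
Unset Printing Implicit Defensive.
Import Order.TTheory GRing.Theory Num.Theory.

(* A pass of the oriented curve D through a crossing:
   (crossing, this pass is the over-branch?, twist bit of the arc of D
   leaving this pass towards the next pass).  The twist bit is [true] iff
   transporting the local orientation (chosen once and for all in a small
   disk around each crossing) along that arc reverses it. *)
Definition pass (n : nat) := ('I_n * bool * bool)%type.

Definition pcross n (p : pass n) : 'I_n := p.1.1.
Definition pover n (p : pass n) : bool := p.1.2.
Definition ptwist n (p : pass n) : bool := p.2.

(* A diagram with n crossings: the cyclic sequence of passes met when
   traversing D in its positive direction, and for each crossing x the
   local writhe [writhe x] = (sign of (d_over x d_under) w.r.t. the chosen
   local orientation at x == +1). *)
Record diagram (n : nat) := Diagram {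
  passes : seq (pass n);
  writhe : 'I_n -> bool
}.

Definition wf_diagram n (D : diagram n) : Prop :=
  forall x : 'I_n,
    count (fun p => (pcross p == x) && pover p) (passes D) = 1%N /\
    count (fun p => (pcross p == x) && ~~ pover p) (passes D) = 1%N.

(* D is an orientation-preserving loop in Sigma. *)
Definition pseudo_classical n (D : diagram n) : Prop :=
  ~~ odd (count (@ptwist n) (passes D)).

(* A labeling of D^2: for each pass i, [nth false l i] says whether the
   component R(D) of the 2-cabling is the strand on the left of D there
   (left w.r.t. the direction of D and the local orientation at the
   crossing). *)
Definition labeling n (D : diagram n) (l : seq bool) : Prop :=
  size l = size (passes D) /\
  forall i, (i < size (passes D))%N ->
    nth false l (i.+1 %% size (passes D)) =
      (nth false l i (+) nth false (map (@ptwist n) (passes D)) i).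

Definition relabel (l : seq bool) : seq bool := map negb l.

(* Crossing change at x: swap over/under at x.  The local writhe
   sign(d_over x d_under) changes sign; the components of D^2 (as sets)
   and hence the labeling are unchanged. *)
Definition crossing_change n (D : diagram n) (x : 'I_n) : diagram n :=
  Diagram [seq if pcross p == x then (pcross p, ~~ pover p, ptwist p) else p
          | p <- passes D]
          (fun y => if y == x then ~~ writhe D y else writhe D y).

(* Reversing the orientation of D: passes are met in reverse order; the
   arc leaving pass i in the new direction is the arc entering it in the
   old one.  Both branch directions at a crossing flip, so the local
   writhe is unchanged. *)
Definition reverse n (D : diagram n) : diagram n :=
  Diagram (rev (zip (unzip1 (passes D)) (rotr 1 (unzip2 (passes D)))))
          (writhe D).

(* The same labeling (R stays R) seen on the reversed diagram: the pass
   order is reversed and left/right w.r.t. the direction of D swap. *)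
Definition reverse_lab (l : seq bool) : seq bool := rev (map negb l).

Definition over_pass n (D : diagram n) (x : 'I_n) : nat :=
  find (fun p => (pcross p == x) && pover p) (passes D).
Definition under_pass n (D : diagram n) (x : 'I_n) : nat :=
  find (fun p => (pcross p == x) && ~~ pover p) (passes D).

(* In a local frame at x with the over branch directed along +e1 and the
   under branch along s*e2 (s = local writhe), the four crossings of the
   pattern are (+-d, +-d) and In(x) = (-d, -s d).  It lies on the
   over-strand y = -s d (the left one iff s = -1) and the under-strand
   x = -d (the left one iff s = +1).
   [in_over_R]  : the over strand at In(x) belongs to R(D);
   [in_under_R] : the under strand at In(x) belongs to R(D). *)
Definition in_over_R n (D : diagram n) (l : seq bool) (x : 'I_n) : bool :=
  nth false l (over_pass D x) == ~~ writhe D x.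
Definition in_under_R n (D : diagram n) (l : seq bool) (x : 'I_n) : bool :=
  nth false l (under_pass D x) == writhe D x.

(* x is of type 1 iff In(x) is an intersection of distinct components. *)
Definition type1 n (D : diagram n) (l : seq bool) (x : 'I_n) : bool :=
  in_over_R D l x != in_under_R D l x.

Definition sign n (D : diagram n) (l : seq bool) (x : 'I_n) : algC :=
  if type1 D l x then
    (if in_over_R D l x then 1 else -1)%R
  else
    (if in_over_R D l x then 'i else - 'i)%R.

From mathcomp Require Import all_boot all_order all_algebra all_field.
From mathcomp Require Import zify.

(** The sign of [x] only depends on the pair [(o, u)] of booleans recording
    whether the over and the under strand of [D^2] at [In(x)] belong to [R(D)].
    Relabeling negates both [o] and [u]; so does reversing [D], which reverses
    the order of the passes, swaps left and right and keeps the local writhe.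
    A crossing change exchanges the over and under passes at [x] and flips the
    local writhe, which exchanges [o] and [u].  Negating both booleans negates
    the sign, and exchanging them negates it exactly when [o != u]. *)
Set Implicit Arguments.
Unset Strict Implicit.
Unset Printing Implicit Defensive.
Import GRing.Theory.
Local Open Scope ring_scope.

Section FindRev.
Variables (T U : Type) (a : pred T).

Lemma find_rev_count1 (s : seq T) :
  count a s = 1%N -> find a (rev s) = (size s - (find a s).+1)%N.
Proof.
move=> a_s1; have a_s : has a s by rewrite has_count a_s1.
case: (split_find a_s) a_s1 => y s1 s2 ay s1Na.
have s1a0 : count a s1 = 0%N by apply/eqP; rewrite -leqn0 leqNgt -has_count.
rewrite -cats1 -catA !count_cat s1a0 /= ay => -[/eqP].
rewrite -leqn0 leqNgt -has_count => s2Na.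
rewrite rev_cat rev_cons -cats1 -catA !find_cat has_rev (negbTE s2Na) (negbTE s1Na) /= ay.
by rewrite !size_cat size_rev /=; lia.
Qed.

Lemma nth_rev_find_count1 (x0 : U) (s : seq T) (t : seq U) :
  count a s = 1%N -> size t = size s ->
  nth x0 (rev t) (find a (rev s)) = nth x0 t (find a s).
Proof.
move=> a_s1 size_ts; have : (find a s < size s)%N by rewrite -has_find has_count a_s1.
rewrite find_rev_count1 // -size_ts => lt_find_t.
by rewrite nth_rev; [congr nth; lia | lia].
Qed.
End FindRev.

Definition pattern_sign (o u : bool) : algC :=
  if o != u then (if o then 1 else -1) else (if o then 'i else - 'i).

Lemma signE n (D : diagram n) l x :
  sign D l x = pattern_sign (in_over_R D l x) (in_under_R D l x).
Proof. by []. Qed.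

Lemma pattern_signNN o u : pattern_sign (~~ o) (~~ u) = - pattern_sign o u.
Proof. by case: o; case: u; rewrite /pattern_sign /= ?opprK. Qed.

Lemma pattern_signC o u : o != u -> pattern_sign u o = - pattern_sign o u.
Proof. by case: o; case: u; rewrite /pattern_sign /= ?opprK. Qed.

Section Transformations.
Variables (n : nat) (D : diagram n) (x : 'I_n).

Definition over_at (c : 'I_n * bool) := (c.1 == x) && c.2.
Definition under_at (c : 'I_n * bool) := (c.1 == x) && ~~ c.2.

Lemma over_passE (E : diagram n) : over_pass E x = find over_at (unzip1 (passes E)).
Proof. by rewrite /over_pass find_map. Qed.

Lemma under_passE (E : diagram n) : under_pass E x = find under_at (unzip1 (passes E)).
Proof. by rewrite /under_pass find_map. Qed.

Lemma over_pass_crossing_change : over_pass (crossing_change D x) x = under_pass D x.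
Proof.
rewrite /over_pass /under_pass find_map; apply: eq_find => -[[y o] t] /=.
rewrite /preim /pcross /pover /=.
by case: (eqVneq y x) => [->|/negbTE ne_yx]; rewrite /= ?eqxx ?ne_yx.
Qed.

Lemma under_pass_crossing_change : under_pass (crossing_change D x) x = over_pass D x.
Proof.
rewrite /over_pass /under_pass find_map; apply: eq_find => -[[y o] t] /=.
rewrite /preim /pcross /pover /=.
by case: (eqVneq y x) => [->|/negbTE ne_yx]; rewrite /= ?eqxx ?negbK ?ne_yx.
Qed.

Lemma in_over_R_crossing_change l : in_over_R (crossing_change D x) l x = in_under_R D l x.
Proof. by rewrite /in_over_R /in_under_R over_pass_crossing_change /= eqxx negbK. Qed.

Lemma in_under_R_crossing_change l : in_under_R (crossing_change D x) l x = in_over_R D l x.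
Proof. by rewrite /in_over_R /in_under_R under_pass_crossing_change /= eqxx. Qed.

Lemma unzip1_reverse : unzip1 (passes (reverse D)) = rev (unzip1 (passes D)).
Proof. by rewrite /unzip1 map_rev -/(unzip1 _) unzip1_zip // size_rotr !size_map. Qed.

Lemma nth_reverse_lab (a : pred ('I_n * bool)) l :
  count a (unzip1 (passes D)) = 1%N -> size l = size (passes D) ->
  nth false (reverse_lab l) (find a (unzip1 (passes (reverse D)))) =
  ~~ nth false l (find a (unzip1 (passes D))).
Proof.
move=> a1 size_l; rewrite unzip1_reverse nth_rev_find_count1 ?size_map //.
by rewrite (nth_map false) // size_l -(size_map fst) -has_find has_count a1.
Qed.

Hypothesis wfD : wf_diagram D.

Lemma count_over_at : count over_at (unzip1 (passes D)) = 1%N.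
Proof. by rewrite count_map; case: (wfD x). Qed.

Lemma count_under_at : count under_at (unzip1 (passes D)) = 1%N.
Proof. by rewrite count_map; case: (wfD x). Qed.

Lemma over_pass_lt_size : (over_pass D x < size (passes D))%N.
Proof. by rewrite over_passE -(size_map fst) -has_find has_count count_over_at. Qed.

Lemma under_pass_lt_size : (under_pass D x < size (passes D))%N.
Proof. by rewrite under_passE -(size_map fst) -has_find has_count count_under_at. Qed.

Variables (l : seq bool).
Hypothesis size_l : size l = size (passes D).

Lemma in_over_R_relabel : in_over_R D (relabel l) x = ~~ in_over_R D l x.
Proof.
rewrite /in_over_R (nth_map false) ?size_l ?over_pass_lt_size //.
by case: nth; case: writhe.
Qed.

Lemma in_under_R_relabel : in_under_R D (relabel l) x = ~~ in_under_R D l x.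
Proof.
rewrite /in_under_R (nth_map false) ?size_l ?under_pass_lt_size //.
by case: nth; case: writhe.
Qed.

Lemma in_over_R_reverse : in_over_R (reverse D) (reverse_lab l) x = ~~ in_over_R D l x.
Proof.
rewrite /in_over_R !over_passE nth_reverse_lab ?count_over_at //=.
by case: nth; case: writhe.
Qed.

Lemma in_under_R_reverse : in_under_R (reverse D) (reverse_lab l) x = ~~ in_under_R D l x.
Proof.
rewrite /in_under_R !under_passE nth_reverse_lab ?count_under_at //=.
by case: nth; case: writhe.
Qed.

End Transformations.

Theorem lemma1 (n : nat) (D : diagram n) (l : seq bool) (x : 'I_n) :
  wf_diagram D -> pseudo_classical D -> labeling D l ->
  (type1 D l x ->
     [/\ sign (crossing_change D x) l x = (- sign D l x)%R,
         sign (reverse D) (reverse_lab l) x = (- sign D l x)%R &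
         sign D (relabel l) x = (- sign D l x)%R]) /\
  (~~ type1 D l x ->
     [/\ sign (crossing_change D x) l x = sign D l x,
         sign D (relabel l) x = (- sign D l x)%R &
         sign (reverse D) (reverse_lab l) x = (- sign D l x)%R]).
Proof.
move=> wfD _ [size_l _].
have sign_cc : sign (crossing_change D x) l x =
                pattern_sign (in_under_R D l x) (in_over_R D l x).
  by rewrite signE in_over_R_crossing_change in_under_R_crossing_change.
have sign_relabel : sign D (relabel l) x = - sign D l x.
  by rewrite signE in_over_R_relabel // in_under_R_relabel // pattern_signNN.
have sign_reverse : sign (reverse D) (reverse_lab l) x = - sign D l x.
  by rewrite signE in_over_R_reverse // in_under_R_reverse // pattern_signNN.
rewrite sign_cc sign_relabel sign_reverse signE /type1.
by split=> [/pattern_signC-> | /negPn/eqP->].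
Qed.
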